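(* Assume the standing assumptions with $0\le\mu<L$. Let $k\in\mathbb N$, $R_k\in\mathbb R$, $v_k\in\mathbb R^n$, $x_k\in\operatorname{dom} g$, $\alpha_k\in(0,1)$, $\gamma_k>0$, and let $\hat\gamma_{k+1},y_k,g_k,v_{k+1},x_{k+1}$ be produced by the stepwise weak accelerated proximal gradient step. Define $\epsilon_k:=F(x_k)-F(T_L y_k)-\langle g_k,x_k-y_k\rangle-\frac1{2L}\|g_k\|^2$ and $$R_{k+1}:=\frac12\Big(L^{-1}-\frac{\alpha_k^2}{\hat\gamma_{k+1}}\Big)\|g_k\|^2+(1-\alpha_k)\Big(\epsilon_k+R_k+\frac{\mu\alpha_k\gamma_k}{2\hat\gamma_{k+1}}\|v_k-y_k\|^2\Big).$$ Then for every $x^*\in\mathbb R^n$, $$F(x_{k+1})-F(x^* )+R_{k+1}+\frac{\hat\gamma_{k+1}}2\|v_{k+1}-x^*\|^2\le(1-\alpha_k)\Big(F(x_k)-F(x^* )+R_k+\frac{\gamma_k}{2}\|v_k-x^*\|^2\Big).$$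
   Context: Standing assumptions: $f:\mathbb R^n\to\mathbb R$ is differentiable with $L$-Lipschitz gradient and $\mu$-strongly convex ($\mu\ge0$); $g:\mathbb R^n\to\mathbb R\cup\{+\infty\}$ proper, closed, convex; $F=f+g$. $T_L(y):=\operatorname{argmin}_x\{g(x)+\langle\nabla f(y),x\rangle+\frac L2\|x-y\|^2\}$, $\mathcal G_L(y):=L(y-T_L(y))$. Stepwise weak accelerated proximal gradient step: given $v_k,x_k$, $\alpha_k\in(0,1)$, $\gamma_k>0$, set $\hat\gamma_{k+1}:=(1-\alpha_k)\gamma_k+\mu\alpha_k$, $y_k:=(\gamma_k+\alpha_k\mu)^{-1}(\alpha_k\gamma_k v_k+\hat\gamma_{k+1}x_k)$, $g_k:=\mathcal G_L(y_k)$, $v_{k+1}:=\hat\gamma_{k+1}^{-1}(\gamma_k(1-\alpha_k)v_k-\alpha_k g_k+\mu\alpha_k y_k)$, $x_{k+1}:=T_L(y_k)$. *)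

From HB Require Import structures.
From mathcomp Require Import all_boot all_order all_algebra.
From mathcomp Require Import all_classical all_reals all_analysis.
Set Implicit Arguments. Unset Strict Implicit. Unset Printing Implicit Defensive.
Import Order.TTheory GRing.Theory Num.Theory.
Import numFieldNormedType.Exports.
Local Open Scope ring_scope.

Section Defs.
Variables (R : realType) (n : nat).
Implicit Types (u v x y : 'rV[R]_n).

Definition dotv u v : R := \sum_(i < n) u 0 i * v 0 i.
Definition sqnorm u : R := dotv u u.
Definition enorm u : R := Num.sqrt (sqnorm u).

Definition is_gradient (f : 'rV[R]_n -> R) (gradf : 'rV[R]_n -> 'rV[R]_n) :=
  forall x, differentiable f x /\ forall h, 'd f x h = dotv (gradf x) h.

Definition lipschitz_grad (gradf : 'rV[R]_n -> 'rV[R]_n) (L : R) :=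
  forall x y, enorm (gradf x - gradf y) <= L * enorm (x - y).

Definition strongly_convex (f : 'rV[R]_n -> R) (mu : R) :=
  forall x y (t : R), 0 <= t <= 1 ->
    f (t *: x + (1 - t) *: y)
      <= t * f x + (1 - t) * f y - mu / 2 * t * (1 - t) * sqnorm (x - y).

Definition proper_fun (g : 'rV[R]_n -> \bar R) :=
  (exists x, (g x < +oo)%E) /\ (forall x, (-oo < g x)%E).

Definition closed_fun (g : 'rV[R]_n -> \bar R) := lower_semicontinuous g.

Definition convex_fun (g : 'rV[R]_n -> \bar R) :=
  forall x y (t : R), 0 <= t <= 1 ->
    (g (t *: x + (1 - t) *: y)%R <= t%:E * g x + (1 - t)%:E * g y)%E.

Definition dom_fun (g : 'rV[R]_n -> \bar R) x := (g x < +oo)%E.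

Definition is_prox_grad_map (g : 'rV[R]_n -> \bar R) (gradf : 'rV[R]_n -> 'rV[R]_n)
  (L : R) (T : 'rV[R]_n -> 'rV[R]_n) :=
  forall y x,
    (g (T y) + (dotv (gradf y) (T y) + L / 2 * sqnorm (T y - y))%:E
      <= g x + (dotv (gradf y) x + L / 2 * sqnorm (x - y))%:E)%E.

Definition grad_map (L : R) (T : 'rV[R]_n -> 'rV[R]_n) y := L *: (y - T y).

End Defs.

From HB Require Import structures.
From mathcomp Require Import all_boot all_order all_algebra.
From mathcomp Require Import all_classical all_reals all_analysis.
From mathcomp Require Import ring lra.
Import Order.TTheory GRing.Theory Num.Theory.
Import numFieldNormedType.Exports.
Local Open Scope ring_scope.
Set Implicit Arguments. Unset Strict Implicit.

(* Summing three first-order facts at y = y_k -- the optimality condition of the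
   prox-grad step, g x >= g (T y) + <grad f y + L (T y - y), x - T y> (obtained by
   comparing T y with the points of the segment [T y, x]), the descent lemma for f
   between y and T y, and strong convexity f x >= f y + <grad f y, x - y>
   + mu/2 |x - y|^2 -- gives F (T y) + <g_k, x - y> + |g_k|^2/2L + mu/2 |x - y|^2
   <= F x.  It is needed only at x = x*, with weight alpha: the corresponding
   quantity at x_k is not estimated but carried as eps_k inside R_{k+1}.  What
   remains is an exact identity expressing hgamma/2 |v_{k+1} - x*|^2 through
   v_k, y_k and g_k. *)

Section InnerProduct.
Variables (R : realType) (n : nat).
Implicit Types (u v w : 'rV[R]_n).

Lemma dotvC u v : dotv u v = dotv v u.
Proof. by apply: eq_bigr => i _; rewrite mulrC. Qed.

Lemma dotvDl u v w : dotv (u + v) w = dotv u w + dotv v w.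
Proof. by rewrite /dotv -big_split; apply: eq_bigr => i _; rewrite !mxE mulrDl. Qed.

Lemma dotvZl (a : R) u w : dotv (a *: u) w = a * dotv u w.
Proof. by rewrite /dotv mulr_sumr; apply: eq_bigr => i _; rewrite !mxE mulrA. Qed.

Lemma dotvNl u w : dotv (- u) w = - dotv u w.
Proof. by rewrite -scaleN1r dotvZl mulN1r. Qed.

Lemma dotvBl u v w : dotv (u - v) w = dotv u w - dotv v w.
Proof. by rewrite dotvDl dotvNl. Qed.

Lemma dotvDr u v w : dotv w (u + v) = dotv w u + dotv w v.
Proof. by rewrite dotvC dotvDl !(dotvC w). Qed.

Lemma dotvZr (a : R) u w : dotv w (a *: u) = a * dotv w u.
Proof. by rewrite dotvC dotvZl dotvC. Qed.

Lemma dotvNr u w : dotv w (- u) = - dotv w u.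
Proof. by rewrite dotvC dotvNl dotvC. Qed.

Lemma dotvBr u v w : dotv w (u - v) = dotv w u - dotv w v.
Proof. by rewrite dotvC dotvBl !(dotvC w). Qed.

Lemma sqnorm_ge0 u : 0 <= sqnorm u.
Proof. by apply: sumr_ge0 => i _; rewrite -expr2 sqr_ge0. Qed.

Lemma sqnormD u v : sqnorm (u + v) = sqnorm u + 2 * dotv u v + sqnorm v.
Proof. by rewrite /sqnorm !dotvDl !dotvDr (dotvC v u); ring. Qed.

Lemma sqnormB u v : sqnorm (u - v) = sqnorm u - 2 * dotv u v + sqnorm v.
Proof. by rewrite /sqnorm !dotvBl !dotvBr (dotvC v u); ring. Qed.

Lemma sqnormZ (a : R) u : sqnorm (a *: u) = a ^+ 2 * sqnorm u.
Proof. by rewrite /sqnorm dotvZl dotvZr; ring. Qed.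

Lemma ler_dotv_sqnorm u v (c : R) : 0 < c -> sqnorm u <= c ^+ 2 * sqnorm v ->
  `|dotv u v| <= c * sqnorm v.
Proof.
move=> c_gt0 le_uv.
have := sqnorm_ge0 (u - c *: v); rewrite sqnormB sqnormZ dotvZr => hB.
have := sqnorm_ge0 (u + c *: v); rewrite sqnormD sqnormZ dotvZr => hD.
rewrite ler_norml; apply/andP; split; nra.
Qed.

Lemma lipschitz_grad_sqnorm (gradf : 'rV[R]_n -> 'rV[R]_n) (L : R) :
  lipschitz_grad gradf L -> 0 <= L ->
  forall u v, sqnorm (gradf u - gradf v) <= L ^+ 2 * sqnorm (u - v).
Proof.
move=> hL L_ge0 u v; have := hL u v; rewrite /enorm.
have := sqnorm_ge0 (gradf u - gradf v); have := sqnorm_ge0 (u - v).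
set A := sqnorm _; set B := sqnorm _ => B_ge0 A_ge0 le_AB.
rewrite -(sqr_sqrtr A_ge0) -(sqr_sqrtr B_ge0).
have := sqrtr_ge0 A; have := sqrtr_ge0 B; nra.
Qed.

End InnerProduct.

Lemma ler_of_forall_ler_addt (R : realFieldType) (a b c : R) :
  (forall t, 0 < t <= 1 -> a <= b + t * c) -> a <= b.
Proof.
move=> le_abt; case: (lerP c 0) => [c_le0|c_gt0].
  by have := le_abt 1; rewrite ltr01 lexx => /(_ isT); nra.
rewrite leNgt; apply/negP => lt_ba.
(* t := (a - b) / (a - b + c) makes b + t c strictly smaller than a *)
have d_gt0 : 0 < a - b + c by lra.
have t_gt0 : 0 < (a - b) / (a - b + c) by apply: divr_gt0; lra.
have t_le1 : (a - b) / (a - b + c) <= 1 by rewrite ler_pdivrMr //; lra.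
have := le_abt _ (introT andP (conj t_gt0 t_le1)).
rewrite -(ler_pM2r d_gt0) mulrDl mulrAC divfK ?gt_eqF //; nra.
Qed.

Lemma increment_le_of_derive_le (R : realType) (psi dpsi : R -> R) (K : R) :
  (forall t, is_derive t (1 : R) psi (dpsi t)) ->
  (forall t, 0 < t < 1 -> dpsi t <= K * t) -> psi 1 - psi 0 <= K / 2.
Proof.
move=> psi_der le_dpsi.
pose chi := psi - (K / 2) \*: ((@id R) * (@id R)).
have chi_der t : is_derive t (1 : R) chi (dpsi t - K * t).
  have := is_deriveB (psi_der t)
    (is_deriveZ (K / 2) (is_deriveM (is_derive_id t (1 : R)) (is_derive_id t (1 : R)))).
  by move=> h; apply: is_derive_eq; rewrite /GRing.scale /=; lra.
have [|c] := MVT ltr01 (fun t _ => chi_der t).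
  by apply: derivable_within_continuous => t _; have [] := chi_der t.
rewrite in_itv /= => /andP[c_gt0 c_lt1]; rewrite subr0.
have -> : chi 1 - chi 0 = (psi 1 - K / 2 * (1 * 1)) - (psi 0 - K / 2 * (0 * 0)) by [].
have := le_dpsi c; rewrite c_gt0 c_lt1 => /(_ isT); lra.
Qed.

Section SmoothFunction.
Variables (R : realType) (n : nat).
Variables (f : 'rV[R]_n -> R) (gradf : 'rV[R]_n -> 'rV[R]_n) (L : R).
Hypothesis hgrad : is_gradient f gradf.

Lemma is_derive_along_line (y d : 'rV[R]_n) (t : R) :
  is_derive t (1 : R) (fun s : R => f (y + s *: d)) (dotv (gradf (y + t *: d)) d).
Proof.
have [f_diff f_d] := hgrad (y + t *: d).
have quotients : (fun h : R => h^-1 *: (((fun s => f (y + s *: d)) \o shift t) (h *: (1 : R))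
                                  - f (y + t *: d)))
        = (fun h : R => h^-1 *: ((f \o shift (y + t *: d)) (h *: d) - f (y + t *: d))).
  apply: funext => h /=; congr (_ *: (f _ - _)).
  by rewrite [h%:A]mulr1 scalerDl addrCA.
split; first by rewrite /derivable quotients; exact: diff_derivable.
by rewrite /derive quotients -f_d; exact: deriveE.
Qed.

Hypotheses (hL : lipschitz_grad gradf L) (L_gt0 : 0 < L).

Lemma taylor_lipschitz_grad (y d : 'rV[R]_n) :
  `|f (y + d) - f y - dotv (gradf y) d| <= L / 2 * sqnorm d.
Proof.
set c := dotv (gradf y) d.
pose psi := (fun s : R => f (y + s *: d)) - c \*: (@id R).
have psi_der t : is_derive t (1 : R) psi (dotv (gradf (y + t *: d)) d - c *: 1).
  exact: is_deriveB (is_derive_along_line y d t) (is_deriveZ c (is_derive_id t (1 : R))).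
have dpsi_bound t : 0 < t < 1 -> `|dotv (gradf (y + t *: d)) d - c *: 1| <= L * sqnorm d * t.
  move=> /andP[t_gt0 _].
  have := lipschitz_grad_sqnorm hL (ltW L_gt0) (y + t *: d) y.
  rewrite addrAC subrr add0r sqnormZ mulrA -exprMn => le_grad.
  have := ler_dotv_sqnorm (mulr_gt0 L_gt0 t_gt0) le_grad.
  by rewrite dotvBl /GRing.scale /= mulr1 -/c mulrAC.
have up := increment_le_of_derive_le psi_der
  (fun t ht => ler_normlW (dpsi_bound t ht)).
have low := increment_le_of_derive_le (fun t => is_deriveN (psi_der t))
  (fun t ht => (ler_normlP _ _ (dpsi_bound t ht)).1).
have psi_01 : psi 1 - psi 0 = f (y + d) - f y - c.
  have -> : psi 1 - psi 0 = (f (y + 1 *: d) - c * 1) - (f (y + 0 *: d) - c * 0) by [].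
  by rewrite scale1r scale0r addr0; lra.
have psiN_01 : (- psi) 1 - (- psi) 0 = - (psi 1 - psi 0).
  by change (- psi 1 - - psi 0 = - (psi 1 - psi 0)); lra.
rewrite psiN_01 psi_01 in low; rewrite psi_01 in up.
by rewrite ler_norml; apply/andP; split; lra.
Qed.

(* [hL] only serves to make the first-order remainder along [x - y] vanish as [t -> 0]. *)
Lemma strongly_convex_first_order (mu : R) : strongly_convex f mu ->
  forall x y, f y + dotv (gradf y) (x - y) + mu / 2 * sqnorm (x - y) <= f x.
Proof.
move=> hmu x y.
apply: (ler_of_forall_ler_addt (c := ((L / 2 + mu / 2) * sqnorm (x - y)))).
move=> t /andP[t_gt0 t_le1].
have := hmu x y t; rewrite (ltW t_gt0) t_le1 => /(_ isT).
have -> : t *: x + (1 - t) *: y = y + t *: (x - y).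
  by apply/rowP => i; rewrite !mxE; ring.
have := taylor_lipschitz_grad y (t *: (x - y)).
rewrite sqnormZ dotvZr ler_norml => /andP[taylor _] convex.
have : 0 <= t * (f x + t * ((L / 2 + mu / 2) * sqnorm (x - y))
             - (f y + dotv (gradf y) (x - y) + mu / 2 * sqnorm (x - y))) by nra.
by rewrite pmulr_rge0 // subr_ge0.
Qed.

End SmoothFunction.

Section ProxGradMap.
Variables (R : realType) (n : nat).
Variables (g : 'rV[R]_n -> \bar R) (gradf : 'rV[R]_n -> 'rV[R]_n) (L : R).
Variable (T : 'rV[R]_n -> 'rV[R]_n).
Hypotheses (L_gt0 : 0 < L) (hgp : proper_fun g) (hgcv : convex_fun g).
Hypothesis hT : is_prox_grad_map g gradf L T.

Lemma proper_fun_fin x : (g x < +oo)%E -> exists r : R, g x = r%:E.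
Proof. by have := hgp.2 x; case: (g x) => [r| |] //= _ _; exists r. Qed.

Lemma prox_grad_map_dom y x : dom_fun g x -> dom_fun g (T y).
Proof.
move=> /proper_fun_fin[r gx]; have := hT y x; rewrite gx /dom_fun.
by have := hgp.2 (T y); case: (g (T y)).
Qed.

Lemma prox_grad_optimality y x (gx gTy : R) : g x = gx%:E -> g (T y) = gTy%:E ->
  gTy + dotv (gradf y) (T y - x) + L * dotv (T y - y) (T y - x) <= gx.
Proof.
move=> g_x g_Ty; set a := T y.
apply: (ler_of_forall_ler_addt (c := (L / 2 * sqnorm (x - a)))).
move=> t /andP[t_gt0 t_le1].
set xt := t *: x + (1 - t) *: a.
have := @hgcv x a t; rewrite (ltW t_gt0) t_le1 g_x g_Ty -/xt => /(_ isT) convex.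
have [gxt g_xt] : exists r : R, g xt = r%:E.
  by apply: proper_fun_fin; apply: le_lt_trans convex _; rewrite ltry.
have := hT y xt; rewrite g_Ty g_xt -/a; rewrite g_xt in convex.
move: convex; rewrite -!EFinM -!EFinD !lee_fin => convex opt.
have -> : a - x = - (x - a) by rewrite opprB.
have xt_y : xt - y = (a - y) + t *: (x - a) by apply/rowP => i; rewrite !mxE; ring.
have xt_a : xt = a + t *: (x - a) by apply/rowP => i; rewrite !mxE; ring.
rewrite xt_y (sqnormD (a - y)) sqnormZ dotvZr {1}xt_a dotvDr dotvZr in opt.
have : 0 <= t * (gx + t * (L / 2 * sqnorm (x - a))
             - (gTy - dotv (gradf y) (x - a) - L * dotv (a - y) (x - a))) by nra.
by rewrite pmulr_rge0 // subr_ge0 !dotvNr; lra.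
Qed.

Variables (f : 'rV[R]_n -> R) (mu : R).
Hypotheses (hgrad : is_gradient f gradf) (hL : lipschitz_grad gradf L).
Hypothesis hmu : strongly_convex f mu.

Lemma prox_grad_inequality y x (gx gTy : R) : g x = gx%:E -> g (T y) = gTy%:E ->
  f (T y) + gTy + dotv (grad_map L T y) (x - y) + (2 * L)^-1 * sqnorm (grad_map L T y)
    + mu / 2 * sqnorm (x - y) <= f x + gx.
Proof.
move=> g_x g_Ty.
have convex := strongly_convex_first_order hgrad hL L_gt0 hmu x y.
have := taylor_lipschitz_grad hgrad hL L_gt0 y (T y - y).
rewrite [y + _]addrC subrK ler_norml => /andP[_ descent].
have := prox_grad_optimality g_x g_Ty.
have -> : T y - x = (T y - y) - (x - y) by rewrite opprB addrA subrK.
rewrite (dotvBr (T y - y) (x - y) (gradf y)) (dotvBr (T y - y) (x - y) (T y - y)) => opt.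
have -> : grad_map L T y = (- L) *: (T y - y) by rewrite /grad_map scaleNr -scalerN opprB.
rewrite sqnormZ dotvZl sqrrN.
have -> : (2 * L)^-1 * (L ^+ 2 * sqnorm (T y - y)) = L / 2 * sqnorm (T y - y).
  by field; rewrite gt_eqF.
by rewrite /sqnorm in convex descent opt *; lra.
Qed.

End ProxGradMap.

(* [v1] is the centre of the quadratic (1 - al) ga/2 |. - v|^2 + al (<G, . - y>
   + mu/2 |. - y|^2); the identity compares both expressions at [xs], using that
   [y] is an affine combination of [v] and [x]. *)
Lemma estimate_sequence_identity (R : realType) (n : nat) (v x xs G : 'rV[R]_n)
  (al ga mu : R) :
  ga + al * mu != 0 -> (1 - al) * ga + mu * al != 0 ->
  let hg := (1 - al) * ga + mu * al in
  let y := (ga + al * mu)^-1 *: (al * ga *: v + hg *: x) in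
  let v1 := hg^-1 *: ((ga * (1 - al)) *: v - al *: G + (mu * al) *: y) in
  hg / 2 * sqnorm (v1 - xs) =
    (1 - al) * ga / 2 * sqnorm (v - xs) + al * mu / 2 * sqnorm (xs - y)
    + al ^+ 2 / (2 * hg) * sqnorm G - (1 - al) * mu * al * ga / (2 * hg) * sqnorm (v - y)
    + al * dotv G (xs - y) + (1 - al) * dotv G (x - y).
Proof.
move=> h1 h2 hg y v1.
rewrite /sqnorm /dotv !mulr_sumr -!big_split -!sumrB -!big_split /=.
by apply: eq_bigr => i _; rewrite /v1 /y /hg !mxE; field; rewrite h1 h2.
Qed.

Theorem mainTheorem4 (R : realType) (n : nat)
  (f : 'rV[R]_n -> R) (gradf : 'rV[R]_n -> 'rV[R]_n)
  (g : 'rV[R]_n -> \bar R) (L mu : R) (T : 'rV[R]_n -> 'rV[R]_n)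
  (hgrad : is_gradient f gradf) (hL : lipschitz_grad gradf L)
  (hmu : strongly_convex f mu) (hmu0 : 0 <= mu) (hmuL : mu < L)
  (hgp : proper_fun g) (hgc : closed_fun g) (hgcv : convex_fun g)
  (hT : is_prox_grad_map g gradf L T)
  (k : nat) (Rk : R) (vk xk : 'rV[R]_n) (hxk : dom_fun g xk)
  (alphak gammak : R) (halpha : 0 < alphak < 1) (hgamma : 0 < gammak) :
  let F := fun x => ((f x)%:E + g x)%E in
  let hgamma1 := (1 - alphak) * gammak + mu * alphak in
  let yk := (gammak + alphak * mu)^-1 *: (alphak * gammak *: vk + hgamma1 *: xk) in
  let gk := grad_map L T yk in
  let vk1 := hgamma1^-1 *: ((gammak * (1 - alphak)) *: vk - alphak *: gk + (mu * alphak) *: yk) in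
  let xk1 := T yk in
  let epsk := (F xk - F (T yk) - (dotv gk (xk - yk) + (2 * L)^-1 * sqnorm gk)%:E)%E in
  let Rk1 := ((2^-1 * (L^-1 - alphak ^+ 2 / hgamma1) * sqnorm gk)%:E
       + (1 - alphak)%:E * (epsk + Rk%:E
            + (mu * alphak * gammak / (2 * hgamma1) * sqnorm (vk - yk))%:E))%E in
  forall xstar : 'rV[R]_n,
    (F xk1 - F xstar + Rk1 + (hgamma1 / 2 * sqnorm (vk1 - xstar))%:E
      <= (1 - alphak)%:E * (F xk - F xstar + Rk%:E + (gammak / 2 * sqnorm (vk - xstar))%:E))%E.
Proof.
move=> F hg1 yk gk vk1 xk1 epsk Rk1 xs.
have L_gt0 : 0 < L by lra.
have /andP[alpha_gt0 alpha_lt1] := halpha.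
have [gxk g_xk] := proper_fun_fin hgp hxk.
have [gTy g_Ty] := proper_fun_fin hgp (prox_grad_map_dom hgp hT yk hxk).
case g_xs : (g xs) => [gs| |]; last by have := hgp.2 xs; rewrite g_xs.
  2: by rewrite /Rk1 /epsk /F /xk1 g_xk g_Ty g_xs /= addeNy !addNye leNye.
rewrite /Rk1 /epsk /F /xk1 g_xk g_Ty g_xs /= -?EFinD -?EFinN -?EFinM -?EFinD -?EFinM -?EFinD lee_fin.
have key := prox_grad_inequality L_gt0 hgp hgcv hT hgrad hL hmu g_xs g_Ty.
have y_den : gammak + alphak * mu != 0 by apply: lt0r_neq0; nra.
have hg1_neq0 : hg1 != 0 by apply: lt0r_neq0; rewrite /hg1; nra.
have := estimate_sequence_identity vk xk xs gk y_den hg1_neq0.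
rewrite /= -/hg1 -/yk -/vk1 => ->.
have := ler_wpM2l (ltW alpha_gt0) key; rewrite -/gk !invfM; nra.
Qed.
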